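(* Let $X$ be a topological space, $Y$ an Alexandroff space, $f:X\to Y$ a continuous surjection, and $\mathcal{S}=(\mathcal{O}(Y),\nabla_Y)$ a spacetime. Then there exists $\nabla_X:\mathcal{O}(X)\to\mathcal{O}(X)$ such that $\mathcal{T}=(\mathcal{O}(X),\nabla_X)$ is a spacetime and $f^{-1}:\mathcal{S}\to\mathcal{T}$ is a logical geometric map.
   Context: $\mathcal{O}(Z)$ denotes the locale of open subsets of a space $Z$ ordered by inclusion. A space is Alexandroff if arbitrary intersections of open sets are open. A spacetime is a pair $(\mathscr{X},\nabla)$ where $\mathscr{X}$ is a locale (complete lattice in which binary meet distributes over arbitrary joins; its monoidal structure is binary meet with unit the top) and $\nabla:\mathscr{X}\to\mathscr{X}$ preserves arbitrary joins. Its implication is $a\to b=\Box(a\Rightarrow b)$, where $\Box$ is the right adjoint of $\nabla$ and $\Rightarrow$ the Heyting implication; equivalently $a\wedge\nabla b\le c$ iff $b\le a\to c$. A geometric map $g:(\mathscr{X},\nabla_1)\to(\mathscr{Y},\nabla_2)$ between spacetimes is a map preserving arbitrary joins and finite meets with $g\nabla_1=\nabla_2 g$; it is logical if moreover it preserves the implication. *)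

From HB Require Import structures.
From mathcomp Require Import all_boot all_order.
From mathcomp Require Import boolp classical_sets topology.
Set Implicit Arguments. Unset Strict Implicit. Unset Printing Implicit Defensive.
Local Open Scope classical_set_scope.

(* The locale O(Z) of open subsets of a space Z is represented by the open
   elements of [set Z]; maps between locales O(Z) -> O(W) are functions
   [set Z -> set W] whose properties are only required on open arguments. *)

Definition alexandroff (Y : topologicalType) : Prop :=
  forall S : set (set Y), (forall A, S A -> open A) -> open (\bigcap_(A in S) A).

Definition preserves_joins (Z W : topologicalType) (g : set Z -> set W) : Prop :=
  (forall A, open A -> open (g A)) /\
  (forall S : set (set Z), (forall A, S A -> open A) ->
     g (\bigcup_(A in S) A) = \bigcup_(A in S) g A).

Definition spacetime (Z : topologicalType) (nabla : set Z -> set Z) : Prop :=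
  preserves_joins nabla.

Definition heyting_impl (Z : topologicalType) (a b : set Z) : set Z :=
  \bigcup_(u in [set u : set Z | open u /\ a `&` u `<=` b]) u.

Definition box (Z : topologicalType) (nabla : set Z -> set Z) (c : set Z) : set Z :=
  \bigcup_(u in [set u : set Z | open u /\ nabla u `<=` c]) u.

Definition st_impl (Z : topologicalType) (nabla : set Z -> set Z) (a b : set Z) : set Z :=
  box nabla (heyting_impl a b).

Definition geometric_map (Z W : topologicalType) (n1 : set Z -> set Z)
  (n2 : set W -> set W) (g : set Z -> set W) : Prop :=
  [/\ preserves_joins g,
      (forall a b, open a -> open b -> g (a `&` b) = g a `&` g b),
      g setT = setT &
      (forall a, open a -> g (n1 a) = n2 (g a))].

Definition logical_geometric_map (Z W : topologicalType) (n1 : set Z -> set Z)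
  (n2 : set W -> set W) (g : set Z -> set W) : Prop :=
  geometric_map n1 n2 g /\
  (forall a b, open a -> open b -> g (st_impl n1 a b) = st_impl n2 (g a) (g b)).

From mathcomp Require Import all_boot all_order.
From mathcomp Require Import boolp classical_sets topology.
Local Open Scope classical_set_scope.

(* Because Y is Alexandroff, the preimage map f^-1 : O(Y) -> O(X) has a left
   adjoint U |-> f_!(U), the smallest open set containing f(U).  Set
   nabla_X := f^-1 o nabla_Y o f_!.  It preserves joins since f_! (a left
   adjoint), nabla_Y and f^-1 do, and f^-1 commutes with nabla because
   f_!(f^-1 a) = a for surjective f.  Preservation of the implication is checked
   on open lower bounds u: chaining the adjunctions f_! -| f^-1, nabla -| Box and
   (a /\ -) -| (a => -), the condition u <= f^-1(a -> b) becomes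
   a /\ nabla_Y(f_! u) <= b, which f^-1 reflects because f is surjective. *)

Section OpenSets.
Context {Z : topologicalType}.
Implicit Types (a b c u v : set Z) (n : set Z -> set Z).

Lemma eq_open_by_lower_bounds a b : open a -> open b ->
  (forall u, open u -> u `<=` a <-> u `<=` b) -> a = b.
Proof.
move=> oa ob ab; rewrite eqEsubset; split; first exact/(ab a oa).
exact/(ab b ob).
Qed.

Lemma eq_open_by_upper_bounds a b : open a -> open b ->
  (forall u, open u -> a `<=` u <-> b `<=` u) -> a = b.
Proof.
move=> oa ob ab; rewrite eqEsubset; split; first exact/(ab b ob).
exact/(ab a oa).
Qed.

Lemma sub_heyting_impl a b u :
  open u -> u `<=` heyting_impl a b <-> a `&` u `<=` b.
Proof.
move=> ou; split=> [uab x [ax ux] | aub]; last exact: bigcup_sup.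
by have [v [_ avb] vx] := uab x ux; apply: avb.
Qed.

Lemma box_open n c : open (box n c).
Proof. by apply: bigcup_open => u []. Qed.

Lemma preserves_joins_subset {n u v} : preserves_joins n ->
  open u -> open v -> u `<=` v -> n u `<=` n v.
Proof.
move=> [_ nU] ou ov uv.
have -> : v = \bigcup_(A in [set u; v]) A.
  rewrite eqEsubset; split; first by move=> x vx; exists v; [right|].
  by apply: bigcup_sub => A [->|->].
by rewrite nU; [move=> x nux; exists u; [left|] | move=> A [->|->]].
Qed.

Lemma sub_box {n c u} : preserves_joins n ->
  open u -> u `<=` box n c <-> n u `<=` c.
Proof.
move=> nJ ou; split=> [ubox | nuc]; last exact: bigcup_sup.
have nbox : n (box n c) `<=` c.
  case: nJ => _ nU; rewrite nU; last by move=> A [].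
  by apply: bigcup_sub => v [].
by move=> x /(preserves_joins_subset nJ ou (box_open n c) ubox) /nbox.
Qed.

(* Open as soon as Z is Alexandroff (open_hull_open), but not in general. *)
Definition open_hull (A : set Z) : set Z :=
  \bigcap_(V in [set V : set Z | open V /\ A `<=` V]) V.

Lemma open_hull_sub (A V : set Z) : open V -> open_hull A `<=` V <-> A `<=` V.
Proof.
move=> oV; split=> [hV | AV]; last exact: bigcap_inf.
by apply: subset_trans hV; apply: sub_bigcap => W [].
Qed.

Lemma open_hull_id a : open a -> open_hull a = a.
Proof.
move=> oa; rewrite eqEsubset; split; first exact/open_hull_sub.
by apply: sub_bigcap => W [].
Qed.

Lemma open_hull_open (A : set Z) : alexandroff Z -> open (open_hull A).
Proof. by move=> alexZ; apply: alexZ => V []. Qed.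

End OpenSets.

Lemma preimage_subset_surj (X Y : Type) (f : X -> Y) (A B : set Y) :
  (forall y, exists x, f x = y) -> f @^-1` A `<=` f @^-1` B -> A `<=` B.
Proof. by move=> fsurj AB y; have [x <-] := fsurj y; apply: AB. Qed.

Lemma image_preimage_surj (X Y : Type) (f : X -> Y) (A : set Y) :
  (forall y, exists x, f x = y) -> f @` (f @^-1` A) = A.
Proof.
move=> fsurj; apply: image_preimage; rewrite -subTset => y _.
by have [x <-] := fsurj y; exists x.
Qed.

Section Pullback.
Context {X Y : topologicalType} (f : X -> Y).
Hypothesis alexY : alexandroff Y.
Hypothesis fcont : continuous f.
Hypothesis fsurj : forall y, exists x, f x = y.

Definition open_image (U : set X) : set Y := open_hull (f @` U).

Lemma open_image_open U : open (open_image U).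
Proof. exact: open_hull_open. Qed.

Lemma open_image_sub U V : open V -> open_image U `<=` V <-> U `<=` f @^-1` V.
Proof. by move=> oV; rewrite open_hull_sub // image_sub. Qed.

Lemma open_image_preimage a : open a -> open_image (f @^-1` a) = a.
Proof. by move=> oa; rewrite /open_image image_preimage_surj // open_hull_id. Qed.

Lemma open_image_bigcup (S : set (set X)) :
  open_image (\bigcup_(U in S) U) = \bigcup_(U in S) open_image U.
Proof.
apply: eq_open_by_upper_bounds => [||V oV]; first exact: open_image_open.
  by apply: bigcup_open => U _; apply: open_image_open.
rewrite open_image_sub //; split=> [SV | hV].
  apply: bigcup_sub => U SU; apply/open_image_sub => // x Ux.
  by apply: SV; exists U.
apply: bigcup_sub => U SU; apply/open_image_sub => //.
by apply: subset_trans _ hV; exact: bigcup_sup.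
Qed.

Lemma preserves_joins_preimage : preserves_joins (fun A : set Y => f @^-1` A).
Proof.
split=> [A oA | S _]; first exact: (proj1 (continuousP f) fcont).
exact: preimage_bigcup.
Qed.

Variable nablaY : set Y -> set Y.
Hypothesis nablaY_joins : spacetime nablaY.

Definition pullback_nabla (U : set X) : set X := f @^-1` nablaY (open_image U).

Lemma pullback_nabla_open U : open (pullback_nabla U).
Proof.
apply: (proj1 preserves_joins_preimage); apply: (proj1 nablaY_joins).
exact: open_image_open.
Qed.

Lemma spacetime_pullback_nabla : spacetime pullback_nabla.
Proof.
split=> [U _ | S _]; first exact: pullback_nabla_open.
have [_ nU] := nablaY_joins.
rewrite /pullback_nabla open_image_bigcup.
rewrite -(bigcup_image S open_image (fun B => B)) nU; last first.
  by move=> B [U _ <-]; apply: open_image_open.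
by rewrite preimage_bigcup bigcup_image.
Qed.

Lemma geometric_map_preimage :
  geometric_map nablaY pullback_nabla (fun A : set Y => f @^-1` A).
Proof.
split; [exact: preserves_joins_preimage | by move=> a b _ _; exact: preimage_setI
       | exact: preimage_setT | ].
by move=> a oa; rewrite /pullback_nabla open_image_preimage.
Qed.

Lemma preimage_st_impl a b : open a -> open b ->
  f @^-1` st_impl nablaY a b = st_impl pullback_nabla (f @^-1` a) (f @^-1` b).
Proof.
have preimage_open := proj1 preserves_joins_preimage.
move=> oa ob; apply: eq_open_by_lower_bounds => [||u ou].
- exact/preimage_open/box_open.
- exact: box_open.
have onu : open (nablaY (open_image u)).
  by apply: (proj1 nablaY_joins); apply: open_image_open.
rewrite -open_image_sub; last exact: box_open.
rewrite (sub_box nablaY_joins (open_image_open u)).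
rewrite (sub_box spacetime_pullback_nabla ou).
rewrite !sub_heyting_impl //; last exact: pullback_nabla_open.
rewrite -preimage_setI; split; first exact: preimage_subset.
exact: preimage_subset_surj.
Qed.

End Pullback.

Theorem corollary5p14 (X Y : topologicalType) (f : X -> Y)
  (nablaY : set Y -> set Y) :
  alexandroff Y -> continuous f -> (forall y : Y, exists x : X, f x = y) ->
  spacetime nablaY ->
  exists nablaX : set X -> set X,
    spacetime nablaX /\
    logical_geometric_map nablaY nablaX (fun A : set Y => f @^-1` A).
Proof.
move=> alexY fcont fsurj nablaY_joins.
exists (pullback_nabla f nablaY); split; last split.
- exact: (spacetime_pullback_nabla f alexY fcont nablaY nablaY_joins).
- exact: (geometric_map_preimage f fcont fsurj nablaY).
- exact: (preimage_st_impl f alexY fcont fsurj nablaY nablaY_joins).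
Qed.
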